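(* Assume each $f_i$ is convex with $L$-Lipschitz gradient (no strong convexity assumed), and let $x^*$ be a minimiser of $F=f+h$. Run SAGA with step size $\gamma=\frac{1}{3L}$ starting from $x^0$ with $\phi_i^0=x^0$ for all $i$, and let $\bar{x}^{k}=\frac{1}{k}\sum_{t=1}^{k}x^{t}$ for $k\ge1$. Then \[ \mathbb{E}\left[F(\bar{x}^{k})\right]-F(x^{*})\leq\frac{4n}{k}\left[\frac{2L}{n}\Vert x^{0}-x^{*}\Vert^{2}+f(x^{0})-\langle f'(x^{*}),x^{0}-x^{*}\rangle -f(x^{*})\right], \] where the expectation is over all random index choices up to step $k$.
   Context: Setting: $f(x)=\frac1n\sum_{i=1}^n f_i(x)$ with each $f_i\colon\mathbb{R}^d\to\mathbb{R}$ convex and differentiable with $L$-Lipschitz gradient $f_i'$; $h\colon\mathbb{R}^d\to\mathbb{R}\cup\{+\infty\}$ is proper, closed, convex; $F=f+h$. The proximal operator is $\mathrm{prox}^h_\gamma(y)=\operatorname{argmin}_{x}\{h(x)+\frac{1}{2\gamma}\Vert x-y\Vert^2\}$. SAGA algorithm with step size $\gamma>0$: start from $x^0\in\mathbb{R}^d$ and $\phi_i^0=x^0$ for all $i$. At iteration $k+1$, given $x^k$ and $\phi_1^k,\dots,\phi_n^k$: pick $j$ uniformly at random from $\{1,\dots,n\}$ (independently of the past); set $\phi_j^{k+1}=x^k$ and $\phi_i^{k+1}=\phi_i^k$ for $i\neq j$; set $w^{k+1}=x^k-\gamma\big[f_j'(\phi_j^{k+1})-f_j'(\phi_j^k)+\frac1n\sum_{i=1}^n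 f_i'(\phi_i^k)\big]$ and $x^{k+1}=\mathrm{prox}^h_\gamma(w^{k+1})$. *)

From HB Require Import structures.
From mathcomp Require Import all_boot.
From Stdlib Require Import Reals.

Set Implicit Arguments.
Unset Strict Implicit.
Unset Printing Implicit Defensive.

Lemma Rplus_assoc_ssr : associative Rplus.
Proof. by move=> x y z; rewrite Rplus_assoc. Qed.
HB.instance Definition _ :=
  Monoid.isComLaw.Build R 0%R Rplus Rplus_assoc_ssr Rplus_comm Rplus_0_l.

Local Open Scope R_scope.

Definition vec (d : nat) := 'I_d -> R.

Definition vadd {d} (x y : vec d) : vec d := fun i => x i + y i.
Definition vsub {d} (x y : vec d) : vec d := fun i => x i - y i.
Definition vscale {d} (a : R) (x : vec d) : vec d := fun i => a * x i.
Definition inner {d} (x y : vec d) : R := \big[Rplus/0]_(i < d) (x i * y i).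
Definition norm2 {d} (x : vec d) : R := inner x x.
Definition norm {d} (x : vec d) : R := sqrt (norm2 x).

Definition avgR (n : nat) (F : 'I_n -> R) : R :=
  / INR n * \big[Rplus/0]_(i < n) F i.
Definition avgV {d} (n : nat) (G : 'I_n -> vec d) : vec d :=
  fun c => / INR n * \big[Rplus/0]_(i < n) G i c.

Definition convex_fun {d} (f : vec d -> R) : Prop :=
  forall (x y : vec d) (t : R), 0 <= t <= 1 ->
    f (vadd (vscale t x) (vscale (1 - t) y)) <= t * f x + (1 - t) * f y.

Definition has_gradient {d} (f : vec d -> R) (g : vec d -> vec d) : Prop :=
  forall (x : vec d) (eps : R), 0 < eps -> exists delta : R, 0 < delta /\
    forall y : vec d, norm (vsub y x) < delta ->
      Rabs (f y - f x - inner (g x) (vsub y x)) <= eps * norm (vsub y x).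

Definition lipschitz {d} (L : R) (g : vec d -> vec d) : Prop :=
  forall x y : vec d, norm (vsub (g x) (g y)) <= L * norm (vsub x y).

(* Extended-real valued h : R^d -> R U {+oo} is represented by its effective
   domain [dom] and its (real) values [h] on [dom]; h = +oo outside [dom]. *)
Definition proper_ext {d} (dom : vec d -> Prop) : Prop := exists x, dom x.

Definition convex_ext {d} (dom : vec d -> Prop) (h : vec d -> R) : Prop :=
  forall (x y : vec d) (t : R), dom x -> dom y -> 0 <= t <= 1 ->
    dom (vadd (vscale t x) (vscale (1 - t) y)) /\
    h (vadd (vscale t x) (vscale (1 - t) y)) <= t * h x + (1 - t) * h y.

Definition vconv {d} (u : nat -> vec d) (x : vec d) : Prop :=
  forall eps, 0 < eps -> exists N, forall m, (N <= m)%nat -> norm (vsub (u m) x) < eps.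

(* closed (= lower semicontinuous): every sublevel set {h <= a} is closed *)
Definition closed_ext {d} (dom : vec d -> Prop) (h : vec d -> R) : Prop :=
  forall (a : R) (u : nat -> vec d) (x : vec d),
    (forall m, dom (u m) /\ h (u m) <= a) -> vconv u x -> dom x /\ h x <= a.

Definition is_prox {d} (dom : vec d -> Prop) (h : vec d -> R)
    (p : R -> vec d -> vec d) : Prop :=
  forall (gam : R) (y : vec d), 0 < gam ->
    dom (p gam y) /\
    forall z, dom z ->
      h (p gam y) + norm2 (vsub (p gam y) y) / (2 * gam)
        <= h z + norm2 (vsub z y) / (2 * gam).

Record saga_state (n d : nat) := SagaState { sx : vec d; sphi : 'I_n -> vec d }.

Definition saga_init {n d} (x0 : vec d) : saga_state n d :=
  SagaState x0 (fun _ => x0).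

Definition saga_step {n d} (g : 'I_n -> vec d -> vec d) (p : R -> vec d -> vec d)
    (gam : R) (s : saga_state n d) (j : 'I_n) : saga_state n d :=
  let x := sx s in
  let phi := sphi s in
  let phi' := fun i => if i == j then x else phi i in
  let w := vsub x (vscale gam
             (vadd (vsub (g j (phi' j)) (g j (phi j)))
                   (avgV (fun i => g i (phi i))))) in
  SagaState (p gam w) phi'.

Definition saga_run {n d} g p gam (x0 : vec d) (js : seq 'I_n) : saga_state n d :=
  foldl (saga_step g p gam) (saga_init x0) js.

(* x^t for t = 1..k along the choices js = (j_1,...,j_k) *)
Definition saga_iter {n d} g p gam (x0 : vec d) (js : seq 'I_n) (t : nat) : vec d :=
  sx (saga_run g p gam x0 (take t js)).

Definition saga_avg {n d} g p gam (x0 : vec d) (k : nat) (js : seq 'I_n) : vec d :=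
  fun c => / INR k * \big[Rplus/0]_(1 <= t < k.+1) saga_iter g p gam x0 js t c.

(* Expectation over k i.i.d. uniform indices in {1..n} (here 'I_n) *)
Definition expect_idx (n k : nat) (X : seq 'I_n -> R) : R :=
  / (INR n ^ k) * \big[Rplus/0]_(js : k.-tuple 'I_n) X (tval js).

From HB Require Import structures.
From mathcomp Require Import all_boot.
From Stdlib Require Import Reals Lra FunctionalExtensionality.
Local Open Scope R_scope.
Set Implicit Arguments.
Unset Strict Implicit.
Unset Printing Implicit Defensive.

(* With the Bregman terms D_i(y) = f_i(y) - f_i(x⋆) - <f_i'(x⋆), y - x⋆>, which are
   nonnegative by convexity, the Lyapunov function
     T = 2 sum_i D_i(phi_i) + (9/2) L ||x - x⋆||^2
   satisfies E[F(x^{k+1}) - F(x⋆) + T^{k+1}] <= T^k at every step: the SAGA direction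
   is an unbiased estimate of f'(x^k), and by co-coercivity its variance is paid for
   by the decrease of the Bregman terms.  Summing k steps, dropping T^k >= 0 and
   applying Jensen's inequality to the averaged iterate gives
   E[F(xbar^k)] - F(x⋆) <= T^0 / k, and T^0 is at most 4n times the bracket. *)

(* The same sum may carry syntactically different (convertible) index types,
   which [ring] would treat as distinct atoms; [set] identifies them first. *)
Ltac abstract_bigs :=
  repeat match goal with |- context [@bigop.body ?R ?I ?i ?r ?F] =>
    let s := fresh "S" in set s := @bigop.body R I i r F end.
Ltac ring_big := abstract_bigs; ring.
Ltac field_big := abstract_bigs; field.

Lemma sumR_scal (I : Type) (r : seq I) (P : pred I) (c : R) (F : I -> R) :
  \big[Rplus/0]_(i <- r | P i) (c * F i) = c * \big[Rplus/0]_(i <- r | P i) F i.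
Proof.
apply: (big_rec2 (fun a b => a = c * b)); first by ring.
by move=> i a b _ ->; ring.
Qed.

(* [big_split], [big_nat_recr] and [big_nat_recl] restated with [Rplus] itself in
   place of the canonical monoid operator, which [ring] and [lra] do not see through. *)
Lemma sumR_add (I : Type) (r : seq I) (P : pred I) (F G : I -> R) :
  \big[Rplus/0]_(i <- r | P i) (F i + G i) =
  \big[Rplus/0]_(i <- r | P i) F i + \big[Rplus/0]_(i <- r | P i) G i.
Proof. exact: big_split. Qed.

Lemma sumR_sub (I : Type) (r : seq I) (P : pred I) (F G : I -> R) :
  \big[Rplus/0]_(i <- r | P i) (F i - G i) =
  \big[Rplus/0]_(i <- r | P i) F i - \big[Rplus/0]_(i <- r | P i) G i.
Proof.
apply: (big_rec3 (fun a b c => a = b - c)); first by ring.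
by move=> i a b c _ ->; ring.
Qed.

Lemma sumR_nat_recr m n (F : nat -> R) : (m <= n)%nat ->
  \big[Rplus/0]_(m <= i < n.+1) F i = \big[Rplus/0]_(m <= i < n) F i + F n.
Proof. exact: big_nat_recr. Qed.

Lemma sumR_nat_recl m n (F : nat -> R) : (m <= n)%nat ->
  \big[Rplus/0]_(m <= i < n.+1) F i = F m + \big[Rplus/0]_(m <= i < n) F i.+1.
Proof. exact: big_nat_recl. Qed.

Lemma sumR_le (I : Type) (r : seq I) (P : pred I) (F G : I -> R) :
  (forall i, P i -> F i <= G i) ->
  \big[Rplus/0]_(i <- r | P i) F i <= \big[Rplus/0]_(i <- r | P i) G i.
Proof.
by move=> H; apply: (big_ind2 (fun a b => a <= b)) => //; [lra | move=> *; lra].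
Qed.

Lemma sumR_ge0 (I : Type) (r : seq I) (P : pred I) (F : I -> R) :
  (forall i, P i -> 0 <= F i) -> 0 <= \big[Rplus/0]_(i <- r | P i) F i.
Proof. by move=> H; apply: (big_ind (fun a => 0 <= a)) => //; [lra | move=> *; lra]. Qed.

Lemma sumR_const_ord (m : nat) (c : R) : \big[Rplus/0]_(i < m) c = INR m * c.
Proof.
elim: m => [|m IH]; first by rewrite big_ord0 /=; ring.
by rewrite big_ord_recr IH S_INR /=; ring.
Qed.

Lemma sumR_const_nat (m : nat) (c : R) : \big[Rplus/0]_(0 <= i < m) c = INR m * c.
Proof. by rewrite big_mkord sumR_const_ord. Qed.

Lemma nonneg_of_vanishing_lower_bound (K b : R) : 0 <= K ->
  (forall t, 0 < t -> t <= 1 -> - (t * K) <= b) -> 0 <= b.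
Proof.
move=> HK H; case: (Rle_lt_dec 0 b) => Hb //.
set t := Rmin 1 (- b / (2 * (K + 1))).
have Ht1 : t <= 1 by apply: Rmin_l.
have Ht2 : t <= - b / (2 * (K + 1)) by apply: Rmin_r.
have Ht0 : 0 < t by apply: Rmin_pos; [lra | apply: Rdiv_lt_0_compat; lra].
have := H t Ht0 Ht1.
have E : - b / (2 * (K + 1)) * (K + 1) = - b / 2 by field; lra.
have : t * (K + 1) <= - b / 2 by rewrite -E; nra.
nra.
Qed.

Lemma nonpos_of_le_div_INR (a c : R) :
  (forall N, (0 < N)%nat -> a <= c / INR N) -> a <= 0.
Proof.
move=> H; case: (Rle_lt_dec a 0) => Ha //.
have [N HN] := INR_unbounded (c / a).
have HN1 : 0 < INR N.+1 by apply: lt_0_INR; apply/ltP.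
have HcN : c < a * INR N.+1.
  have E : c / a * a = c by field; lra.
  have : c / a * a < INR N.+1 * a by rewrite S_INR; nra.
  lra.
have := H N.+1 (ltn0Sn N).
have : c / INR N.+1 < a.
  by apply/(Rmult_lt_reg_r (INR N.+1)) => //; rewrite /Rdiv Rmult_assoc Rinv_l; lra.
lra.
Qed.

Lemma vext d (a b : vec d) : (forall c, a c = b c) -> a = b.
Proof. by move=> H; apply: functional_extensionality. Qed.

Section Inner.
Variable d : nat.
Implicit Types a b c : vec d.

Lemma inner_addl a b c : inner (vadd a b) c = inner a c + inner b c.
Proof. by rewrite /inner -sumR_add; apply: eq_bigr => i _; rewrite /vadd; ring. Qed.
Lemma inner_addr a b c : inner c (vadd a b) = inner c a + inner c b.
Proof. by rewrite /inner -sumR_add; apply: eq_bigr => i _; rewrite /vadd; ring. Qed.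
Lemma inner_subl a b c : inner (vsub a b) c = inner a c - inner b c.
Proof. by rewrite /inner -sumR_sub; apply: eq_bigr => i _; rewrite /vsub; ring. Qed.
Lemma inner_subr a b c : inner c (vsub a b) = inner c a - inner c b.
Proof. by rewrite /inner -sumR_sub; apply: eq_bigr => i _; rewrite /vsub; ring. Qed.
Lemma inner_scalel t a b : inner (vscale t a) b = t * inner a b.
Proof. by rewrite /inner -sumR_scal; apply: eq_bigr => i _; rewrite /vscale; ring. Qed.
Lemma inner_scaler t a b : inner a (vscale t b) = t * inner a b.
Proof. by rewrite /inner -sumR_scal; apply: eq_bigr => i _; rewrite /vscale; ring. Qed.
Lemma inner_sym a b : inner a b = inner b a.
Proof. by rewrite /inner; apply: eq_bigr => i _; ring. Qed.

Lemma norm2_ge0 a : 0 <= norm2 a.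
Proof. by apply: sumR_ge0 => i _; nra. Qed.
Lemma norm_ge0 a : 0 <= norm a.
Proof. exact: sqrt_pos. Qed.
Lemma norm_sq a : norm a * norm a = norm2 a.
Proof. by rewrite /norm sqrt_sqrt //; apply: norm2_ge0. Qed.

End Inner.

Ltac vexp := rewrite /norm2;
  repeat first [rewrite inner_subl | rewrite inner_subr | rewrite inner_addl
               | rewrite inner_addr | rewrite inner_scalel | rewrite inner_scaler];
  repeat match goal with |- context [inner ?a ?b] =>
    match goal with |- context [inner b a] =>
      assert_fails (constr_eq a b); rewrite (inner_sym b a) end end.

Section Norm.
Variable d : nat.
Implicit Types a b : vec d.

Lemma norm2_scale t a : norm2 (vscale t a) = t * t * norm2 a.
Proof. by vexp; ring. Qed.

Lemma norm_scale t a : 0 <= t -> norm (vscale t a) = t * norm a.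
Proof.
move=> Ht; rewrite /norm norm2_scale sqrt_mult ?sqrt_square //; last exact: norm2_ge0.
by nra.
Qed.

Lemma norm2_subC a b : norm2 (vsub a b) = norm2 (vsub b a).
Proof. by vexp; ring. Qed.

Lemma young s a b : 2 * s * inner a b <= s * s * norm2 a + norm2 b.
Proof. by have := norm2_ge0 (vsub (vscale s a) b); vexp; nra. Qed.

Lemma norm2_sub_le s a b : 0 < s ->
  norm2 (vsub a b) <= (1 + s) * norm2 a + (1 + / s) * norm2 b.
Proof.
move=> Hs; have Hy := young (- s) a b.
have -> : norm2 (vsub a b) = norm2 a - 2 * inner a b + norm2 b by vexp; ring.
apply: (Rmult_le_reg_l s) => //.
have -> : s * ((1 + s) * norm2 a + (1 + / s) * norm2 b) =
          s * norm2 a + s * s * norm2 a + s * norm2 b + norm2 b by field; lra.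
lra.
Qed.

Lemma inner_le_young s a b : 0 < s -> inner a b <= / s / 4 * norm2 a + s * norm2 b.
Proof.
move=> Hs; have Hy := young (2 * s) b a; rewrite inner_sym in Hy.
apply: (Rmult_le_reg_l (4 * s)); first lra.
have -> : 4 * s * (/ s / 4 * norm2 a + s * norm2 b) = norm2 a + 4 * (s * s) * norm2 b
  by field; lra.
lra.
Qed.

Lemma inner_le_of_norm2_le c a b : 0 < c -> norm2 a <= c * c * norm2 b ->
  inner a b <= c * norm2 b.
Proof.
move=> Hc Hab; have := young c b a; rewrite inner_sym.
move=> Hy; apply: (Rmult_le_reg_l (2 * c)); nra.
Qed.

Lemma lipschitz_norm2 L (g : vec d -> vec d) : lipschitz L g -> forall x y,
  norm2 (vsub (g x) (g y)) <= L * L * norm2 (vsub x y).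
Proof.
move=> H x y; have := H x y; rewrite -norm_sq -(norm_sq (vsub x y)).
have := norm_ge0 (vsub (g x) (g y)); have := norm_ge0 (vsub x y); nra.
Qed.

End Norm.

Section SmoothConvex.
Variables (d : nat) (f : vec d -> R) (g : vec d -> vec d) (L : R).
Hypothesis HL : 0 < L.
Hypothesis Hconv : convex_fun f.
Hypothesis Hgrad : has_gradient f g.
Hypothesis Hlip : lipschitz L g.

Lemma convex_gradient_ineq x y : f x + inner (g x) (vsub y x) <= f y.
Proof.
set v := vsub y x; set nv := norm v.
have Hnv : 0 <= nv by apply: norm_ge0.
suff : 0 <= f y - f x - inner (g x) v by lra.
apply: (nonneg_of_vanishing_lower_bound Hnv) => eps He _.
have [delta [Hd Hnear]] := Hgrad x He.
set t := Rmin 1 (delta / (2 * (nv + 1))).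
have Ht1 : t <= 1 by apply: Rmin_l.
have Ht2 : t <= delta / (2 * (nv + 1)) by apply: Rmin_r.
have Ht0 : 0 < t by apply: Rmin_pos; [lra | apply: Rdiv_lt_0_compat; lra].
have Htn : t * nv < delta.
  have E : delta / (2 * (nv + 1)) * (nv + 1) = delta / 2 by field; lra.
  have : t * (nv + 1) <= delta / 2 by rewrite -E; nra.
  nra.
set z := vadd (vscale t y) (vscale (1 - t) x).
have Hz : vsub z x = vscale t v by apply: vext => c; rewrite /z /v /vsub /vadd /vscale; ring.
have Hzn : norm (vsub z x) = t * nv by rewrite Hz norm_scale //; lra.
have := Hnear z; rewrite Hzn Hz inner_scaler => /(_ Htn) Hdiff.
have Hcz := Hconv y x (conj (Rlt_le _ _ Ht0) Ht1); rewrite -/z in Hcz.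
have := Rle_abs (- (f z - f x - t * inner (g x) v)); rewrite Rabs_Ropp.
nra.
Qed.

Lemma smooth_chord_bound a b x v : 0 < b -> a <= b ->
  f (vadd x (vscale b v)) - f (vadd x (vscale a v)) <=
  (b - a) * (inner (g x) v + L * b * norm2 v).
Proof.
move=> Hb Hab.
set za := vadd x (vscale a v); set zb := vadd x (vscale b v).
have := convex_gradient_ineq zb za.
have -> : vsub za zb = vscale (- (b - a)) v.
  by apply: vext => c; rewrite /za /zb /vsub /vadd /vscale; ring.
rewrite inner_scaler.
have -> : inner (g zb) v = inner (g x) v + inner (vsub (g zb) (g x)) v by rewrite inner_subl; ring.
have Hdiff : inner (vsub (g zb) (g x)) v <= L * b * norm2 v.
  apply: inner_le_of_norm2_le; first nra.
  have := lipschitz_norm2 Hlip zb x.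
  have -> : vsub zb x = vscale b v by apply: vext => c; rewrite /zb /vsub /vadd /vscale; ring.
  by rewrite norm2_scale; lra.
nra.
Qed.

Lemma smooth_discrete_descent N m x v : (0 < N)%nat ->
  f (vadd x (vscale (INR m / INR N) v)) - f x <=
  INR m / INR N * inner (g x) v + L * norm2 v * INR m * (INR m + 1) / (2 * (INR N * INR N)).
Proof.
move=> HN; have HNr : 0 < INR N by apply: lt_0_INR; apply/ltP.
elim: m => [|m IH].
  have -> : vadd x (vscale (INR 0 / INR N) v) = x.
    by apply: vext => c; rewrite /vadd /vscale /=; field; lra.
  rewrite /=; have -> : 0 / INR N = 0 by field; lra.
  have -> : L * norm2 v * 0 * (0 + 1) / (2 * (INR N * INR N)) = 0 by field; lra.
  lra.
have Hm := pos_INR m.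
have Hpos : 0 < (INR m + 1) / INR N by apply: Rdiv_lt_0_compat; lra.
have Hle : INR m / INR N <= (INR m + 1) / INR N.
  by apply: Rmult_le_compat_r; [apply: Rlt_le; apply: Rinv_0_lt_compat | ]; lra.
have := smooth_chord_bound x v Hpos Hle.
rewrite S_INR.
have -> : (INR m + 1) / INR N - INR m / INR N = / INR N by field; lra.
have -> : (INR m + 1) / INR N * inner (g x) v =
          INR m / INR N * inner (g x) v + / INR N * inner (g x) v
  by field; lra.
have -> : L * norm2 v * (INR m + 1) * (INR m + 1 + 1) / (2 * (INR N * INR N)) =
  L * norm2 v * INR m * (INR m + 1) / (2 * (INR N * INR N)) +
  / INR N * (L * ((INR m + 1) / INR N) * norm2 v) by field; lra.
lra.
Qed.

(* The descent lemma, without integration: let the number of steps go to infinity. *)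
Lemma smooth_upper_bound x y :
  f y <= f x + inner (g x) (vsub y x) + L / 2 * norm2 (vsub y x).
Proof.
set v := vsub y x.
suff : f y - f x - inner (g x) v - L / 2 * norm2 v <= 0 by lra.
apply: (@nonpos_of_le_div_INR _ (L / 2 * norm2 v)) => N HN.
have HNr : 0 < INR N by apply: lt_0_INR; apply/ltP.
have := smooth_discrete_descent N x v HN.
have -> : vadd x (vscale (INR N / INR N) v) = y.
  by apply: vext => c; rewrite /vadd /vscale /v /vsub; field; lra.
have -> : INR N / INR N = 1 by field; lra.
have -> : L * norm2 v * INR N * (INR N + 1) / (2 * (INR N * INR N)) =
  L / 2 * norm2 v + L / 2 * norm2 v / INR N by field; lra.
lra.
Qed.

(* Compare [f] at [y - (g y - g x)/L] from above (descent lemma at [y]) and from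
   below (gradient inequality at [x]). *)
Lemma smooth_cocoercive_lower_bound x y :
  f x + inner (g x) (vsub y x) + / (2 * L) * norm2 (vsub (g y) (g x)) <= f y.
Proof.
set D := vsub (g y) (g x).
set z := vsub y (vscale (/ L) D).
have HA := convex_gradient_ineq x z.
have HB := smooth_upper_bound y z.
have Ezx : vsub z x = vsub (vsub y x) (vscale (/ L) D).
  by apply: vext => c; rewrite /z /vsub /vscale; ring.
have Ezy : vsub z y = vscale (- / L) D.
  by apply: vext => c; rewrite /z /vsub /vscale; ring.
rewrite Ezx inner_subr inner_scaler in HA.
rewrite Ezy inner_scaler norm2_scale in HB.
have ED : norm2 D = inner (g y) D - inner (g x) D by rewrite /norm2 {1}/D inner_subl.
have -> : / (2 * L) = / L / 2 by field; lra.
have E : L / 2 * (- / L * - / L * norm2 D) = / L / 2 * norm2 D by field; lra.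
have : / L * norm2 D = / L * inner (g y) D - / L * inner (g x) D by rewrite ED; ring.
lra.
Qed.

End SmoothConvex.

Section Averages.
Variable n : nat.
Hypothesis Hn : (0 < n)%nat.
Implicit Types F G : 'I_n -> R.

Lemma INR_n_gt0 : 0 < INR n.
Proof. by apply: lt_0_INR; apply/ltP. Qed.

Lemma avgR_ext F G : (forall i, F i = G i) -> avgR F = avgR G.
Proof. by move=> H; rewrite /avgR; congr (_ * _); apply: eq_bigr => i _. Qed.
Lemma avgR_add F G : avgR (fun i => F i + G i) = avgR F + avgR G.
Proof. by rewrite /avgR sumR_add Rmult_plus_distr_l. Qed.
Lemma avgR_sub F G : avgR (fun i => F i - G i) = avgR F - avgR G.
Proof. by rewrite /avgR sumR_sub Rmult_minus_distr_l. Qed.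
Lemma avgR_scal c F : avgR (fun i => c * F i) = c * avgR F.
Proof. by rewrite /avgR sumR_scal; ring_big. Qed.
Lemma avgR_const c : avgR (fun _ : 'I_n => c) = c.
Proof. by rewrite /avgR sumR_const_ord; have := INR_n_gt0 => ?; field; lra. Qed.
Lemma avgR_le F G : (forall i, F i <= G i) -> avgR F <= avgR G.
Proof.
move=> H; apply: Rmult_le_compat_l; last exact: sumR_le.
by apply: Rlt_le; apply: Rinv_0_lt_compat; apply: INR_n_gt0.
Qed.
Lemma avgR_ge0 F : (forall i, 0 <= F i) -> 0 <= avgR F.
Proof. by move=> H; have := avgR_le H; rewrite avgR_const. Qed.

Variable d : nat.
Implicit Types A B : 'I_n -> vec d.

Lemma inner_avgV_l A y : inner (avgV A) y = avgR (fun i => inner (A i) y).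
Proof.
rewrite /inner /avgV /avgR [X in _ = _ * X]exchange_big -[in RHS]sumR_scal.
apply: eq_bigr => c _; rewrite Rmult_assoc; congr (_ * _).
by rewrite Rmult_comm -sumR_scal; apply: eq_bigr => i _; ring.
Qed.
Lemma inner_avgV_r A y : inner y (avgV A) = avgR (fun i => inner y (A i)).
Proof. by rewrite inner_sym inner_avgV_l; apply: avgR_ext => i; rewrite inner_sym. Qed.

Lemma avgV_sub A B : avgV (fun i => vsub (A i) (B i)) = vsub (avgV A) (avgV B).
Proof. by apply: vext => c; rewrite /avgV /vsub sumR_sub Rmult_minus_distr_l. Qed.
Lemma avgV_addr A (a : vec d) : avgV (fun i => vadd (A i) a) = vadd (avgV A) a.
Proof.
apply: vext => c; rewrite /avgV /vadd sumR_add sumR_const_ord.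
by have := INR_n_gt0 => ?; field_big; lra.
Qed.
Lemma avgV_const (a : vec d) : avgV (fun _ : 'I_n => a) = a.
Proof. by apply: vext => c; rewrite /avgV sumR_const_ord; have := INR_n_gt0 => ?; field; lra. Qed.

Lemma avg_norm2_centered A :
  avgR (fun i => norm2 (vsub (A i) (avgV A))) = avgR (fun i => norm2 (A i)) - norm2 (avgV A).
Proof.
rewrite (@avgR_ext _ (fun i => norm2 (A i) - 2 * inner (A i) (avgV A) + norm2 (avgV A)));
  last by move=> i; vexp; ring.
by rewrite avgR_add avgR_sub avgR_scal avgR_const -inner_avgV_l /norm2; ring.
Qed.

Lemma avg_norm2_centered_le A :
  avgR (fun i => norm2 (vsub (A i) (avgV A))) <= avgR (fun i => norm2 (A i)).
Proof. by rewrite avg_norm2_centered; have := norm2_ge0 (avgV A); lra. Qed.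

Lemma avg_norm2_centered_sub_le A B :
  avgR (fun j => norm2 (vsub (vsub (A j) (B j)) (avgV (fun i => vsub (A i) (B i))))) <=
  2 * avgR (fun i => norm2 (A i)) + 2 * avgR (fun i => norm2 (B i)).
Proof.
apply: Rle_trans (avg_norm2_centered_le _) _.
rewrite -!avgR_scal -avgR_add; apply: avgR_le => i.
by have := norm2_sub_le (A i) (B i) Rlt_0_1; rewrite Rinv_1; lra.
Qed.

Lemma avg_norm2_sub_centered_le A B :
  avgR (fun j => norm2 (vsub (A j) (vsub (B j) (avgV B)))) <=
  3 * avgR (fun i => norm2 (A i)) + 3 / 2 * avgR (fun i => norm2 (B i)).
Proof.
have := avg_norm2_centered_le B.
have : avgR (fun j => norm2 (vsub (A j) (vsub (B j) (avgV B)))) <=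
  3 * avgR (fun i => norm2 (A i)) + 3 / 2 * avgR (fun i => norm2 (vsub (B i) (avgV B))).
  rewrite -!avgR_scal -avgR_add; apply: avgR_le => i.
  have := norm2_sub_le (A i) (vsub (B i) (avgV B)) Rlt_R0_R2.
  lra.
lra.
Qed.

End Averages.

Section Prox.
Variables (d : nat) (dom : vec d -> Prop) (h : vec d -> R).
Hypothesis Hhconv : convex_ext dom h.

Lemma prox_variational_ineq prox gam y z : is_prox dom h prox -> 0 < gam -> dom z ->
  h (prox gam y) + / gam * inner (vsub y (prox gam y)) (vsub z (prox gam y)) <= h z.
Proof.
move=> Hp Hg Hz; case: (Hp gam y Hg) => Hq Hmin.
set q := prox gam y in Hq Hmin *; set u := vsub z q.
have -> : inner (vsub y q) u = - inner (vsub q y) u by rewrite !inner_subl; ring.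
suff : 0 <= h z - h q + / gam * inner (vsub q y) u by lra.
apply: (nonneg_of_vanishing_lower_bound (K := norm2 u / (2 * gam))) => [|t Ht0 Ht1].
  by apply: Rle_mult_inv_pos; [apply: norm2_ge0 | lra].
case: (Hhconv Hz Hq (conj (Rlt_le _ _ Ht0) Ht1)) => Hzt Hhzt.
have := Hmin _ Hzt.
have -> : vsub (vadd (vscale t z) (vscale (1 - t) q)) y = vadd (vsub q y) (vscale t u).
  by apply: vext => c; rewrite /vsub /vadd /vscale /u /vsub; ring.
have -> : norm2 (vadd (vsub q y) (vscale t u)) =
          norm2 (vsub q y) + 2 * t * inner (vsub q y) u + t * t * norm2 u by vexp; ring.
set b := h z - h q + / gam * inner (vsub q y) u.
move=> Hm.
have : 0 <= t * (b + t * (norm2 u / (2 * gam))).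
  have -> : t * (b + t * (norm2 u / (2 * gam))) =
    t * (h z - h q) + (2 * t * inner (vsub q y) u + t * t * norm2 u) / (2 * gam).
    by rewrite /b; field; lra.
  have : (norm2 (vsub q y) + 2 * t * inner (vsub q y) u + t * t * norm2 u) / (2 * gam) =
    norm2 (vsub q y) / (2 * gam) + (2 * t * inner (vsub q y) u + t * t * norm2 u) / (2 * gam)
    by field; lra.
  lra.
rewrite -(Rmult_0_r t) => /(Rmult_le_reg_l _ _ _ Ht0); lra.
Qed.

Lemma min_first_order_condition (f : vec d -> R) (g : vec d -> vec d) (L : R) xs :
  0 <= L ->
  (forall x y, f y <= f x + inner (g x) (vsub y x) + L / 2 * norm2 (vsub y x)) ->
  dom xs -> (forall y, dom y -> f xs + h xs <= f y + h y) ->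
  forall z, dom z -> h xs - inner (g xs) (vsub z xs) <= h z.
Proof.
move=> HL Hsmooth Hxs Hmin z Hz; set u := vsub z xs.
suff : 0 <= h z - h xs + inner (g xs) u by lra.
apply: (nonneg_of_vanishing_lower_bound (K := L / 2 * norm2 u)) => [|t Ht0 Ht1].
  by have := norm2_ge0 u; nra.
case: (Hhconv Hz Hxs (conj (Rlt_le _ _ Ht0) Ht1)) => Hzt Hhzt.
have := Hmin _ Hzt; have := Hsmooth xs (vadd (vscale t z) (vscale (1 - t) xs)).
have -> : vsub (vadd (vscale t z) (vscale (1 - t) xs)) xs = vscale t u.
  by apply: vext => c; rewrite /vsub /vadd /vscale /u /vsub; ring.
rewrite inner_scaler norm2_scale => Hup Hm.
set b := h z - h xs + inner (g xs) u.
have : 0 <= t * (b + t * (L / 2 * norm2 u)).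
  have -> : t * (b + t * (L / 2 * norm2 u)) =
    t * (h z - h xs) + (t * inner (g xs) u + L / 2 * (t * t * norm2 u)) by rewrite /b; ring.
  lra.
rewrite -(Rmult_0_r t) => /(Rmult_le_reg_l _ _ _ Ht0); lra.
Qed.

End Prox.

Lemma convex_fun_ext d (f : vec d -> R) : convex_fun f -> convex_ext (fun _ => True) f.
Proof. by move=> Hf x y t _ _ Ht; split => //; apply: Hf. Qed.

Section Jensen.
Variables (d : nat) (dom : vec d -> Prop) (phi : vec d -> R).
Hypothesis Hconv : convex_ext dom phi.

Lemma jensen (k : nat) (p : nat -> vec d) : (0 < k)%nat ->
  (forall t, (t < k)%nat -> dom (p t)) ->
  dom (fun c => / INR k * \big[Rplus/0]_(0 <= t < k) p t c) /\
  phi (fun c => / INR k * \big[Rplus/0]_(0 <= t < k) p t c) <=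
    / INR k * \big[Rplus/0]_(0 <= t < k) phi (p t).
Proof.
case: k => [//|k] _; elim: k => [|k IH] Hdom.
  have -> : (fun c => / INR 1 * \big[Rplus/0]_(0 <= t < 1) p t c) = p 0%nat.
    by apply: vext => c; rewrite big_nat1 /=; field.
  by rewrite big_nat1 /=; split; [apply: Hdom | lra].
have [Ha Hphi] := IH (fun t Ht => Hdom t (ltnW Ht)).
set a := fun c => / INR k.+1 * \big[Rplus/0]_(0 <= t < k.+1) p t c in Ha Hphi.
have Hk := pos_INR k.
set s := INR k.+1 / INR k.+2.
have Hs : 0 <= s <= 1.
  rewrite /s !S_INR; split; first by apply: Rle_mult_inv_pos; lra.
  by apply: (Rmult_le_reg_r (INR k + 1 + 1)); [lra | rewrite /Rdiv Rmult_assoc Rinv_l; lra].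
case: (Hconv Ha (Hdom k.+1 (ltnSn _)) Hs) => Hdom' Hphi'.
have -> : (fun c => / INR k.+2 * \big[Rplus/0]_(0 <= t < k.+2) p t c) =
          vadd (vscale s a) (vscale (1 - s) (p k.+1)).
  apply: vext => c; rewrite sumR_nat_recr // /vadd /vscale /a /s.
  by abstract_bigs; rewrite !S_INR; field; lra.
split => //; rewrite sumR_nat_recr //; apply: (Rle_trans _ _ _ Hphi').
have : s * phi a <= s * (/ INR k.+1 * \big[Rplus/0]_(0 <= t < k.+1) phi (p t)).
  by apply: Rmult_le_compat_l; lra.
have : s * (/ INR k.+1 * \big[Rplus/0]_(0 <= t < k.+1) phi (p t)) + (1 - s) * phi (p k.+1) =
       / INR k.+2 * (\big[Rplus/0]_(0 <= t < k.+1) phi (p t) + phi (p k.+1)).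
  by rewrite /s; abstract_bigs; rewrite !S_INR; field; lra.
lra.
Qed.

End Jensen.

Section Expectation.
Variable n : nat.
Hypothesis Hn : (0 < n)%nat.

Lemma expect_idx0 (X : seq 'I_n -> R) : expect_idx 0 X = X [::].
Proof.
rewrite /expect_idx (eq_bigl (fun t : 0.-tuple 'I_n => t == [tuple])); last first.
  by move=> t; rewrite tuple0 eqxx.
by rewrite big_pred1_eq /=; field.
Qed.

Lemma expect_idxS k (X : seq 'I_n -> R) :
  expect_idx k.+1 X = avgR (fun j => expect_idx k (fun s => X (j :: s))).
Proof.
rewrite /expect_idx /avgR.
rewrite (reindex (fun p : 'I_n * k.-tuple 'I_n => [tuple of p.1 :: p.2])) /=; last first.
  apply: onW_bij; exists (fun t : k.+1.-tuple 'I_n => (thead t, [tuple of behead t])).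
    by move=> [j t] /=; congr pair; apply: val_inj.
  by move=> t /=; rewrite [RHS]tuple_eta; apply: val_inj.
rewrite -(pair_bigA _ (fun (j : 'I_n) (t : k.-tuple 'I_n) => X (j :: t))) /=.
have HnR : INR n <> 0 by have := INR_n_gt0 Hn; lra.
have Hpk : INR n ^ k <> 0 by apply: pow_nonzero.
rewrite -sumR_scal.
have -> : / (INR n * INR n ^ k) = / INR n * / INR n ^ k by field.
by rewrite -sumR_scal; apply: eq_bigr => i _; ring_big.
Qed.

Lemma expect_idx_le k (X Y : seq 'I_n -> R) :
  (forall t : k.-tuple 'I_n, X t <= Y t) -> expect_idx k X <= expect_idx k Y.
Proof.
move=> H; apply: Rmult_le_compat_l; last exact: sumR_le.
by apply: Rlt_le; apply: Rinv_0_lt_compat; apply: pow_lt; apply: INR_n_gt0.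
Qed.

Lemma expect_idx_addl k c (X : seq 'I_n -> R) :
  expect_idx k (fun s => c + X s) = c + expect_idx k X.
Proof.
elim: k c X => [|k IH] c X; first by rewrite !expect_idx0.
rewrite !expect_idxS (avgR_ext (G := fun j => c + expect_idx k (fun s => X (j :: s)))) //.
by rewrite avgR_add avgR_const.
Qed.

Lemma expect_idx_scal k c (X : seq 'I_n -> R) :
  expect_idx k (fun s => c * X s) = c * expect_idx k X.
Proof. by rewrite /expect_idx sumR_scal; ring_big. Qed.

Variables (T : Type) (step : T -> 'I_n -> T) (cost pot : T -> R).
Hypothesis pot_decrease : forall s, avgR (fun j => cost (step s j) + pot (step s j)) <= pot s.

Lemma expect_idx_sum_cost_le k s :
  expect_idx k (fun js => \big[Rplus/0]_(0 <= t < k) cost (foldl step s (take t.+1 js))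
                          + pot (foldl step s js)) <= pot s.
Proof.
elim: k s => [|k IH] s.
  by rewrite expect_idx0 big_geq //=; lra.
rewrite expect_idxS; apply: Rle_trans (pot_decrease s); apply: (avgR_le Hn) => j.
have -> : (fun js => \big[Rplus/0]_(0 <= t < k.+1) cost (foldl step s (take t.+1 (j :: js)))
                     + pot (foldl step s (j :: js))) =
          (fun js => cost (step s j) +
            (\big[Rplus/0]_(0 <= t < k) cost (foldl step (step s j) (take t.+1 js))
             + pot (foldl step (step s j) js))).
  apply: functional_extensionality => js.
  by rewrite sumR_nat_recl //= take0 Rplus_assoc.
by rewrite expect_idx_addl; have := IH (step s j); lra.
Qed.

End Expectation.

Section SagaAnalysis.
Variables (n d : nat) (L : R).
Hypothesis Hn : (0 < n)%nat.
Hypothesis HL : 0 < L.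
Variables (fi : 'I_n -> vec d -> R) (gi : 'I_n -> vec d -> vec d).
Hypothesis Hconv : forall i, convex_fun (fi i).
Hypothesis Hgrad : forall i, has_gradient (fi i) (gi i).
Hypothesis Hlip : forall i, lipschitz L (gi i).
Variables (dom : vec d -> Prop) (h : vec d -> R).
Hypothesis Hhconv : convex_ext dom h.
Variable prox : R -> vec d -> vec d.
Hypothesis Hprox : is_prox dom h prox.
Variable xs : vec d.
Hypothesis Hxs_dom : dom xs.
Hypothesis Hxs_min : forall y, dom y ->
  avgR (fun i => fi i xs) + h xs <= avgR (fun i => fi i y) + h y.

Definition favg x := avgR (fun i => fi i x).
Definition gavg x := avgV (fun i => gi i x).
Definition Fobj x := favg x + h x.

Lemma favg_upper_bound x y :
  favg y <= favg x + inner (gavg x) (vsub y x) + L / 2 * norm2 (vsub y x).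
Proof.
have := avgR_le Hn (fun i => smooth_upper_bound HL (Hconv i) (Hgrad i) (Hlip i) x y).
by rewrite !avgR_add (avgR_const Hn) -inner_avgV_l.
Qed.

Lemma favg_cocoercive_lower_bound x y :
  favg x + inner (gavg x) (vsub y x) + / (2 * L) * avgR (fun i => norm2 (vsub (gi i y) (gi i x)))
  <= favg y.
Proof.
have := avgR_le Hn (fun i => smooth_cocoercive_lower_bound HL (Hconv i) (Hgrad i) (Hlip i) x y).
by rewrite !avgR_add avgR_scal -inner_avgV_l.
Qed.

Lemma h_subgradient_at_min z : dom z -> h xs - inner (gavg xs) (vsub z xs) <= h z.
Proof.
apply: (min_first_order_condition Hhconv (f := favg) (L := L)) => //.
- by lra.
- exact: favg_upper_bound.
Qed.

Definition bregman i y := fi i y - fi i xs - inner (gi i xs) (vsub y xs).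
Definition bregman_avg (phi : 'I_n -> vec d) := avgR (fun i => bregman i (phi i)).
Definition grad_gap (phi : 'I_n -> vec d) := avgR (fun i => norm2 (vsub (gi i (phi i)) (gi i xs))).

Lemma bregman_avg_ge0 phi : 0 <= bregman_avg phi.
Proof.
apply: (avgR_ge0 Hn) => i.
by have := convex_gradient_ineq (Hconv i) (Hgrad i) xs (phi i); rewrite /bregman; lra.
Qed.

Lemma bregman_avg_const x :
  bregman_avg (fun _ => x) = favg x - favg xs - inner (gavg xs) (vsub x xs).
Proof. by rewrite /bregman_avg /bregman !avgR_sub -inner_avgV_l. Qed.

Lemma bregman_avg_ge_grad_gap phi : / L / 2 * grad_gap phi <= bregman_avg phi.
Proof.
rewrite /grad_gap -avgR_scal; apply: (avgR_le Hn) => i.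
have := smooth_cocoercive_lower_bound HL (Hconv i) (Hgrad i) (Hlip i) xs (phi i).
have -> : / (2 * L) = / L / 2 by field; lra.
by rewrite /bregman; lra.
Qed.

Lemma inner_gavg_sub_ge x :
  bregman_avg (fun _ => x) + / L / 2 * grad_gap (fun _ => x) <=
  inner (vsub x xs) (vsub (gavg x) (gavg xs)).
Proof.
have := favg_cocoercive_lower_bound x xs.
have -> : / (2 * L) = / L / 2 by field; lra.
have -> : avgR (fun i => norm2 (vsub (gi i xs) (gi i x))) = grad_gap (fun _ => x).
  by apply: avgR_ext => i; rewrite norm2_subC.
by rewrite bregman_avg_const; vexp; lra.
Qed.

Lemma avg_bregman_avg_update (phi : 'I_n -> vec d) x :
  avgR (fun j => bregman_avg (fun i => if i == j then x else phi i)) =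
  bregman_avg phi + / INR n * (bregman_avg (fun _ => x) - bregman_avg phi).
Proof.
have Hupdate j : bregman_avg (fun i => if i == j then x else phi i) =
                 bregman_avg phi + / INR n * (bregman j x - bregman j (phi j)).
  rewrite /bregman_avg /avgR (bigD1 j) //= (bigD1 j (P := xpredT)) //= eqxx.
  rewrite (eq_bigr (fun i => bregman i (phi i))); first by ring_big.
  by move=> i /= /negbTE ->.
by rewrite (avgR_ext Hupdate) avgR_add (avgR_const Hn) avgR_scal avgR_sub.
Qed.

Let gam := / (3 * L).

Lemma gam_gt0 : 0 < gam.
Proof. by apply: Rinv_0_lt_compat; lra. Qed.

(* With [gam = 1/(3L)] the [norm2 (vsub p x)] terms coming from the three-point
   identity (-3L/2), the descent lemma (L/2) and Young's inequality (L) cancel. *)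
Lemma prox_step_value_bound x v :
  let p := prox gam (vsub x (vscale gam v)) in
  Fobj p - Fobj xs <=
  3 * L / 2 * (norm2 (vsub x xs) - norm2 (vsub p xs))
  + / L / 4 * norm2 (vsub (gavg x) v) + inner (vsub (gavg x) v) (vsub x xs)
  - / L / 2 * grad_gap (fun _ => x).
Proof.
move=> p; rewrite /Fobj.
have Hvi := prox_variational_ineq Hhconv (vsub x (vscale gam v)) Hprox gam_gt0 Hxs_dom.
have Hup := favg_upper_bound x p.
have Hlow := favg_cocoercive_lower_bound x xs.
have Hyg := inner_le_young (vsub (gavg x) v) (vsub p x) HL.
rewrite -/p in Hvi.
have -> : grad_gap (fun _ => x) = avgR (fun i => norm2 (vsub (gi i xs) (gi i x))).
  by apply: avgR_ext => i; rewrite norm2_subC.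
set G := avgR (fun i => norm2 (vsub (gi i xs) (gi i x))) in Hlow *.
have E2L : / (2 * L) = / L / 2 by field; lra.
have Ethree : / gam * inner (vsub (vsub x (vscale gam v)) p) (vsub xs p) =
  3 * L / 2 * (norm2 (vsub p x) + norm2 (vsub p xs) - norm2 (vsub x xs)) - inner v (vsub xs p).
  rewrite /gam Rinv_inv; vexp; field; lra.
have Esplit : inner (gavg x) (vsub p x) - inner (gavg x) (vsub xs x) + inner v (vsub xs p) =
  inner (vsub (gavg x) v) (vsub p x) + inner (vsub (gavg x) v) (vsub x xs) by vexp; ring.
rewrite E2L in Hlow; lra.
Qed.

(* The prox step is firmly nonexpansive relative to [xs], which is the fixed
   point of the same step taken with the exact gradient [gavg xs]. *)
Lemma prox_step_dist_bound x v :
  let p := prox gam (vsub x (vscale gam v)) in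
  norm2 (vsub p xs) <= norm2 (vsub (vsub x xs) (vscale gam (vsub v (gavg xs)))).
Proof.
move=> p; have Hg := gam_gt0.
have Hvi := prox_variational_ineq Hhconv (vsub x (vscale gam v)) Hprox Hg Hxs_dom.
have Hpd : dom p by case: (Hprox (vsub x (vscale gam v)) Hg).
have Hopt := h_subgradient_at_min Hpd.
rewrite -/p in Hvi.
have : inner (vsub (vsub x (vscale gam v)) p) (vsub xs p) <= gam * inner (gavg xs) (vsub p xs).
  apply: (Rmult_le_reg_l (/ gam)); first exact: Rinv_0_lt_compat.
  by rewrite -Rmult_assoc Rinv_l; lra.
set a := vsub (vsub x xs) (vscale gam (vsub v (gavg xs))).
set u := vsub p xs.
have : inner (vsub (vsub x (vscale gam v)) p) (vsub xs p) - gam * inner (gavg xs) u =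
       norm2 u - inner a u by rewrite /u /a; vexp; ring.
have := young 1 a u.
lra.
Qed.

Definition saga_dir (phi : 'I_n -> vec d) x j :=
  vadd (vsub (gi j x) (gi j (phi j))) (avgV (fun i => gi i (phi i))).

Lemma saga_step_eq phi x j :
  saga_step gi prox gam (SagaState x phi) j =
  SagaState (prox gam (vsub x (vscale gam (saga_dir phi x j))))
            (fun i => if i == j then x else phi i).
Proof. by rewrite /saga_step /= eqxx. Qed.

Section SagaDirection.
Variables (phi : 'I_n -> vec d) (x : vec d).
Let A i := vsub (gi i x) (gi i xs).
Let B i := vsub (gi i (phi i)) (gi i xs).

Let avgV_A : avgV A = vsub (gavg x) (gavg xs).
Proof. exact: avgV_sub. Qed.
Let avgV_B : avgV B = vsub (avgV (fun i => gi i (phi i))) (gavg xs).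
Proof. exact: avgV_sub. Qed.

Lemma avgV_saga_dir : avgV (saga_dir phi x) = gavg x.
Proof.
rewrite /saga_dir (avgV_addr Hn) avgV_sub.
by apply: vext => c; rewrite /vadd /vsub /gavg; ring.
Qed.

Lemma avg_norm2_gavg_sub_saga_dir :
  avgR (fun j => norm2 (vsub (gavg x) (saga_dir phi x j))) <=
  2 * grad_gap (fun _ => x) + 2 * grad_gap phi.
Proof.
rewrite (@avgR_ext _ _
  (fun j => norm2 (vsub (vsub (A j) (B j)) (avgV (fun i => vsub (A i) (B i))))));
  first exact: avg_norm2_centered_sub_le.
move=> j; rewrite norm2_subC avgV_sub avgV_A avgV_B; congr norm2.
by apply: vext => c; rewrite /saga_dir /A /B /vadd /vsub /gavg; ring.
Qed.

Lemma avg_norm2_saga_dir_sub_gavg :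
  avgR (fun j => norm2 (vsub (saga_dir phi x j) (gavg xs))) <=
  3 * grad_gap (fun _ => x) + 3 / 2 * grad_gap phi.
Proof.
rewrite (@avgR_ext _ _ (fun j => norm2 (vsub (A j) (vsub (B j) (avgV B)))));
  first exact: avg_norm2_sub_centered_le.
move=> j; rewrite avgV_B; congr norm2.
by apply: vext => c; rewrite /saga_dir /A /B /vadd /vsub /gavg; ring.
Qed.

End SagaDirection.

Lemma saga_expected_dist_bound phi x :
  9 / 2 * L * avgR (fun j => norm2 (vsub (prox gam (vsub x (vscale gam (saga_dir phi x j)))) xs))
  <= 9 / 2 * L * norm2 (vsub x xs) - 3 * bregman_avg (fun _ => x) + 3 / 2 * bregman_avg phi.
Proof.
set e := vsub x xs; pose c j := vsub (saga_dir phi x j) (gavg xs).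
have Hpt j : norm2 (vsub (prox gam (vsub x (vscale gam (saga_dir phi x j)))) xs) <=
             norm2 e - 2 * gam * inner e (c j) + gam * gam * norm2 (c j).
  have := prox_step_dist_bound x (saga_dir phi x j); cbv zeta.
  by rewrite -/(c j) -/e; vexp; lra.
have := avgR_le Hn Hpt.
rewrite (avgR_add (fun j => norm2 e - 2 * gam * inner e (c j))) avgR_sub (avgR_const Hn).
rewrite !avgR_scal -inner_avgV_r /c avgV_sub avgV_saga_dir (avgV_const Hn) => Havg.
have HC := avg_norm2_saga_dir_sub_gavg phi x.
have Hin := inner_gavg_sub_ge x.
have Hbr := bregman_avg_ge_grad_gap phi.
have Hmul := Rmult_le_compat_l (9 / 2 * L) _ _ ltac:(lra) Havg.
have E : 9 / 2 * L * (norm2 e - 2 * gam * inner e (vsub (gavg x) (gavg xs)) +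
    gam * gam * avgR (fun j => norm2 (vsub (saga_dir phi x j) (gavg xs)))) =
  9 / 2 * L * norm2 e - 3 * inner e (vsub (gavg x) (gavg xs)) +
    / L / 2 * avgR (fun j => norm2 (vsub (saga_dir phi x j) (gavg xs))) by rewrite /gam; field; lra.
have HiL : 0 < / L by apply: Rinv_0_lt_compat.
have := Rmult_le_compat_l (/ L / 2) _ _ ltac:(lra) HC.
rewrite E in Hmul; rewrite -/e in Hin; move=> ?; lra.
Qed.

Definition lyapunov (s : saga_state n d) :=
  2 * INR n * bregman_avg (sphi s) + 9 / 2 * L * norm2 (vsub (sx s) xs).

Lemma lyapunov_ge0 s : 0 <= lyapunov s.
Proof.
have := bregman_avg_ge0 (sphi s); have := norm2_ge0 (vsub (sx s) xs).
by rewrite /lyapunov; have := pos_INR n; nra.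
Qed.

Lemma saga_lyapunov_decrease s :
  avgR (fun j => Fobj (sx (saga_step gi prox gam s j)) - Fobj xs
                 + lyapunov (saga_step gi prox gam s j)) <= lyapunov s.
Proof.
case: s => x phi.
pose p j := prox gam (vsub x (vscale gam (saga_dir phi x j))).
pose Rd j := norm2 (vsub (p j) xs).
pose N j := norm2 (vsub (gavg x) (saga_dir phi x j)).
pose I j := inner (vsub (gavg x) (saga_dir phi x j)) (vsub x xs).
pose B j := bregman_avg (fun i => if i == j then x else phi i).
set r := norm2 (vsub x xs); set G := grad_gap (fun _ => x).
have Hpt j : Fobj (sx (saga_step gi prox gam (SagaState x phi) j)) - Fobj xs
             + lyapunov (saga_step gi prox gam (SagaState x phi) j) <=
             3 * L / 2 * r - / L / 2 * G + 3 * L * Rd j + / L / 4 * N j + I j + 2 * INR n * B j.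
  rewrite saga_step_eq /lyapunov /=.
  have := prox_step_value_bound x (saga_dir phi x j); cbv zeta.
  by rewrite -/(p j) -/(Rd j) -/(N j) -/(I j) -/(B j) -/r -/G; lra.
apply: Rle_trans (avgR_le Hn Hpt) _.
have HI : avgR I = 0.
  rewrite /I (@avgR_ext _ _
    (fun j => inner (gavg x) (vsub x xs) - inner (saga_dir phi x j) (vsub x xs)));
    last by move=> j; rewrite inner_subl.
  by rewrite avgR_sub (avgR_const Hn) -inner_avgV_l avgV_saga_dir; ring.
have HN : avgR N <= 2 * G + 2 * grad_gap phi := avg_norm2_gavg_sub_saga_dir phi x.
have HB : avgR B = bregman_avg phi + / INR n * (bregman_avg (fun _ => x) - bregman_avg phi)
  := avg_bregman_avg_update phi x.
have HR : 9 / 2 * L * avgR Rd <=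
          9 / 2 * L * r - 3 * bregman_avg (fun _ => x) + 3 / 2 * bregman_avg phi
  := saga_expected_dist_bound phi x.
have Hbr := bregman_avg_ge_grad_gap phi.
clearbody p Rd N I B.
rewrite !avgR_add !avgR_scal !(avgR_const Hn) HI HB /lyapunov /= -/r.
have HnR := INR_n_gt0 Hn.
have -> : 2 * INR n * (bregman_avg phi + / INR n * (bregman_avg (fun _ => x) - bregman_avg phi)) =
          2 * INR n * bregman_avg phi + 2 * bregman_avg (fun _ => x) - 2 * bregman_avg phi
  by field; lra.
have : / L / 4 * avgR N <= / L / 4 * (2 * G + 2 * grad_gap phi).
  apply: Rmult_le_compat_l => //; apply: Rlt_le.
  by apply: Rdiv_lt_0_compat; [apply: Rinv_0_lt_compat | lra].
lra.
Qed.

Lemma saga_iterate_dom s js : js <> [::] -> dom (sx (foldl (saga_step gi prox gam) s js)).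
Proof.
elim: js s => [//|j js IH] s _; case: js IH => [|j' js] IH /=.
  exact: proj1 (Hprox _ gam_gt0).
exact: IH.
Qed.

Lemma Fobj_jensen k (p : nat -> vec d) : (0 < k)%nat -> (forall t, (t < k)%nat -> dom (p t)) ->
  Fobj (fun c => / INR k * \big[Rplus/0]_(0 <= t < k) p t c) <=
  / INR k * \big[Rplus/0]_(0 <= t < k) Fobj (p t).
Proof.
move=> Hk Hdom; set a := fun c => _.
have [_ Hh] := jensen Hhconv Hk Hdom.
have Hf i : fi i a <= / INR k * \big[Rplus/0]_(0 <= t < k) fi i (p t).
  by have [_] := jensen (convex_fun_ext (Hconv i)) (p := p) Hk (fun _ _ => I).
have Eswap : avgR (fun i => \big[Rplus/0]_(0 <= t < k) fi i (p t)) =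
              \big[Rplus/0]_(0 <= t < k) favg (p t).
  by rewrite /avgR exchange_big -sumR_scal.
have := avgR_le Hn Hf; rewrite avgR_scal Eswap => Hfa.
by rewrite /Fobj sumR_add Rmult_plus_distr_l; apply: Rplus_le_compat.
Qed.

Lemma saga_avg_gap_le x0 k js : (0 < k)%nat -> size js = k ->
  Fobj (saga_avg gi prox gam x0 k js) - Fobj xs <=
  / INR k * (\big[Rplus/0]_(0 <= t < k) (Fobj (saga_iter gi prox gam x0 js t.+1) - Fobj xs)
             + lyapunov (saga_run gi prox gam x0 js)).
Proof.
move=> Hk Hsize; have HkR : 0 < INR k by apply: lt_0_INR; apply/ltP.
pose p t := saga_iter gi prox gam x0 js t.+1.
have -> : saga_avg gi prox gam x0 k js = fun c => / INR k * \big[Rplus/0]_(0 <= t < k) p t c.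
  by apply: vext => c; rewrite /saga_avg big_add1.
have Hdom t : (t < k)%nat -> dom (p t).
  by move=> Ht; apply: saga_iterate_dom; rewrite -Hsize in Ht; case: js Ht {Hsize p}.
have := Fobj_jensen Hk Hdom.
have := lyapunov_ge0 (saga_run gi prox gam x0 js).
rewrite sumR_sub sumR_const_nat -/(p _).
set Psi := lyapunov _; set a := fun c => _; abstract_bigs => HPsi HJ.
have -> : / INR k * (S - INR k * Fobj xs + Psi) = / INR k * S - Fobj xs + / INR k * Psi
  by field; lra.
have : 0 <= / INR k * Psi by apply: Rmult_le_pos => //; apply: Rlt_le; apply: Rinv_0_lt_compat.
lra.
Qed.

Lemma saga_expected_gap_le x0 k : (0 < k)%nat ->
  expect_idx k (fun js => Fobj (saga_avg gi prox gam x0 k js)) - Fobj xs <=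
  / INR k * lyapunov (saga_init x0).
Proof.
move=> Hk; have HkR : 0 < INR k by apply: lt_0_INR; apply/ltP.
pose run js := foldl (saga_step gi prox gam) (saga_init x0) js.
pose Z js :=
  \big[Rplus/0]_(0 <= t < k) (Fobj (sx (run (take t.+1 js))) - Fobj xs) + lyapunov (run js).
have HZ : expect_idx k Z <= lyapunov (saga_init x0).
  exact: (expect_idx_sum_cost_le Hn (cost := fun s => Fobj (sx s) - Fobj xs)
                                     saga_lyapunov_decrease).
have Hpt (js : k.-tuple 'I_n) :
    - Fobj xs + Fobj (saga_avg gi prox gam x0 k js) <= / INR k * Z js.
  by rewrite Rplus_comm; exact (saga_avg_gap_le x0 Hk (size_tuple js)).
have := expect_idx_le Hn (X := fun js => - Fobj xs + Fobj (saga_avg gi prox gam x0 k js))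
  (Y := fun js => / INR k * Z js) Hpt; rewrite expect_idx_addl // expect_idx_scal.
have : / INR k * expect_idx k Z <= / INR k * lyapunov (saga_init x0).
  by apply: Rmult_le_compat_l => //; apply: Rlt_le; apply: Rinv_0_lt_compat.
lra.
Qed.

Lemma lyapunov_init_le x0 :
  lyapunov (saga_init x0) <=
  4 * INR n * (2 * L / INR n * norm2 (vsub x0 xs) + bregman_avg (fun _ => x0)).
Proof.
have HnR := INR_n_gt0 Hn; have := bregman_avg_ge0 (fun _ => x0); have := norm2_ge0 (vsub x0 xs).
rewrite /lyapunov /=.
have -> : 4 * INR n * (2 * L / INR n * norm2 (vsub x0 xs) + bregman_avg (fun _ => x0)) =
          8 * L * norm2 (vsub x0 xs) + 4 * INR n * bregman_avg (fun _ => x0) by field; lra.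
nra.
Qed.

End SagaAnalysis.

Theorem theorem2
  (n d : nat) (Hn : (0 < n)%nat) (L : R) (HL : 0 < L)
  (fi : 'I_n -> vec d -> R) (gi : 'I_n -> vec d -> vec d)
  (Hconv : forall i, convex_fun (fi i))
  (Hgrad : forall i, has_gradient (fi i) (gi i))
  (Hlip : forall i, lipschitz L (gi i))
  (dom : vec d -> Prop) (h : vec d -> R)
  (Hproper : proper_ext dom) (Hclosed : closed_ext dom h) (Hhconv : convex_ext dom h)
  (prox : R -> vec d -> vec d) (Hprox : is_prox dom h prox)
  (xstar : vec d) (Hxs_dom : dom xstar)
  (Hxs_min : forall y, dom y ->
     avgR (fun i => fi i xstar) + h xstar <= avgR (fun i => fi i y) + h y)
  (x0 : vec d) (k : nat) (Hk : (1 <= k)%nat) :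
  let f := fun x => avgR (fun i => fi i x) in
  let f' := fun x => avgV (fun i => gi i x) in
  let F := fun x => f x + h x in
  let gam := / (3 * L) in
  expect_idx k (fun js => F (saga_avg gi prox gam x0 k js)) - F xstar
  <= 4 * INR n / INR k *
     (2 * L / INR n * norm2 (vsub x0 xstar) + f x0
      - inner (f' xstar) (vsub x0 xstar) - f xstar).
Proof.
(* Properness and closedness of [h] only serve to make [prox] and [xstar] exist. *)
move=> f f' F gam.
have HnR := INR_n_gt0 Hn.
have HkR : 0 < INR k by apply: lt_0_INR; apply/ltP.
have Hgap := saga_expected_gap_le Hn HL Hconv Hgrad Hlip Hhconv Hprox Hxs_dom Hxs_min x0 Hk.
have Hinit := lyapunov_init_le Hn HL Hconv Hgrad xstar x0.
rewrite bregman_avg_const in Hinit.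
have := Rmult_le_compat_l (/ INR k) _ _ ltac:(apply: Rlt_le; apply: Rinv_0_lt_compat; lra) Hinit.
have -> : 4 * INR n / INR k * (2 * L / INR n * norm2 (vsub x0 xstar) + f x0
            - inner (f' xstar) (vsub x0 xstar) - f xstar) =
          / INR k * (4 * INR n * (2 * L / INR n * norm2 (vsub x0 xstar) +
            (favg fi x0 - favg fi xstar - inner (gavg gi xstar) (vsub x0 xstar)))).
  by rewrite /f /f' /favg /gavg; field; lra.
exact: Rle_trans Hgap.
Qed.
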